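(* Let $G$ be a finite graph and let $a\ge 0$, $b\ge 1$ be integers. Then $\phi^a_b(M(G))\ge \phi^{a+b}_{2b}(G)$. Moreover, for every positive integer $t$, $\phi^0_2(M^t(G))\ge \phi^{2^{t+1}-2}_{2^{t+1}}(G)$.
   Context: For $G$ with $V(G)=\{v_1,\dots,v_n\}$, the Mycielskian $M(G)$ has vertex set $\{v_1,\dots,v_n\}\cup\{v'_1,\dots,v'_n\}\cup\{z\}$ and edge set $E(G)\cup\{v'_iv_j: v_iv_j\in E(G)\}\cup\{zv'_i: 1\le i\le n\}$. $M^1(G)=M(G)$ and $M^t(G)=M(M^{t-1}(G))$ for $t\ge2$. An independent set $F$ of $G$ is free if it is contained in at least two distinct maximal independent sets; an edge $uv$ supports $F$ if $F\cap(N(u)\cup N(v))=\emptyset$. For integers $a\ge0,b\ge1$, $\phi^a_b(G)$ is the minimum $t$ such that $V(G)$ is partitioned into independent sets $V_1,\dots,V_t$ with $V_1,\dots,V_{t-a}$ free, and there are edges $e_1,\dots,e_{t-a}$ (not necessarily distinct) with $e_i$ supporting $V_i$ and every vertex incident with at most $b$ of $e_1,\dots,e_{t-a}$; $\phi^a_b(G)=\infty$ if no such $t$ exists. *)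

From mathcomp Require Import all_boot.
From Stdlib Require Import ClassicalEpsilon.
Set Implicit Arguments. Unset Strict Implicit. Unset Printing Implicit Defensive.

Record graph := Graph {
  vert :> finType;
  adj : rel vert;
  adj_sym : symmetric adj;
  adj_irr : irreflexive adj }.

(* Mycielskian: None = z, Some (inl v) = v, Some (inr v) = v'. *)
Definition myc_adj (G : graph) : rel (option (vert G + vert G)) :=
  fun x y =>
    match x, y with
    | Some (inl u), Some (inl v) => adj u v
    | Some (inl u), Some (inr v) => adj u v
    | Some (inr u), Some (inl v) => adj u v
    | Some (inr _), None => true
    | None, Some (inr _) => true
    | _, _ => false
    end.

Lemma myc_adj_sym G : symmetric (@myc_adj G).
Proof.
by move=> [[u|u]|] [[v|v]|] //=; rewrite adj_sym.
Qed.

Lemma myc_adj_irr G : irreflexive (@myc_adj G).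
Proof. by move=> [[u|u]|] //=; rewrite adj_irr. Qed.

Definition Myc (G : graph) : graph :=
  @Graph (option (vert G + vert G))%type (@myc_adj G) (@myc_adj_sym G) (@myc_adj_irr G).

Definition Myc_iter (t : nat) (G : graph) : graph := iter t Myc G.

Section Phi.
Variable G : graph.
Local Notation V := (vert G).

Definition nbhd (u : V) : {set V} := [set w | adj u w].

Definition indep (F : {set V}) : bool :=
  [forall u in F, forall v in F, ~~ adj u v].

Definition free (F : {set V}) : bool :=
  indep F &&
  [exists S1 : {set V}, exists S2 : {set V},
     [&& S1 != S2, maxset indep S1, maxset indep S2, F \subset S1 & F \subset S2]].

Definition supports (u v : V) (F : {set V}) : bool :=
  adj u v && [disjoint F & nbhd u :|: nbhd v].

(* t is admissible for phi^a_b: a partition V_0,...,V_{t-1} (classes may be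
   empty) given by f, into independent sets, the first t-a of them free and
   supported by edges g i, with every vertex incident to at most b of these
   edges (counted with multiplicity). *)
Definition phi_feasible (a b t : nat) : bool :=
  [exists f : {ffun V -> 'I_t}, exists g : {ffun 'I_t -> (V * V)%type},
    [&& [forall i : 'I_t, indep [set x | f x == i]],
        [forall i : 'I_t, (i < t - a) ==>
            (free [set x | f x == i] && supports (g i).1 (g i).2 [set x | f x == i])]
      & [forall v : V,
           #|[set i : 'I_t | (i < t - a) && (((g i).1 == v) || ((g i).2 == v))]| <= b]]].

(* phi^a_b(G) as an extended natural: None = infinity *)
Definition phi (a b : nat) : option nat :=
  match excluded_middle_informative (exists t, phi_feasible a b t) with
  | left H => Some (ex_minn H)
  | right _ => None
  end.

End Phi.

Definition le_ext (x y : option nat) : Prop :=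
  match x, y with
  | _, None => True
  | None, Some _ => False
  | Some m, Some n => m <= n
  end.

From mathcomp Require Import all_boot.
From Stdlib Require Import ClassicalEpsilon.
Set Implicit Arguments. Unset Strict Implicit. Unset Printing Implicit Defensive.

(* A feasible partition of M(G) projects to one of G: keep the colouring on the
   copy of G, and send each supporting edge to the edge of G obtained by
   forgetting the primes.  A supporting edge of M(G) disjoint from z projects to
   an edge supporting the restricted class; at most b of the first t - a classes
   use an edge at z, so at least t - (a + b) classes stay supported, and a vertex
   v of G is touched by at most b projected edges through v and b through v', so
   by at most 2b. Iterating t times gives the second inequality. *)

Lemma le_ext_refl x : le_ext x x.
Proof. by case: x => /=. Qed.

Lemma le_ext_trans x y z : le_ext x y -> le_ext y z -> le_ext x z.
Proof. by case: x => [x|]; case: y => [y|]; case: z => [z|] //=; apply: leq_trans. Qed.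

Lemma phi_le_feasible (H : graph) a b t :
  phi_feasible H a b t -> le_ext (phi H a b) (Some t).
Proof.
rewrite /phi; case: excluded_middle_informative => [ex|nex] ft /=.
  by case: ex_minnP => m _; apply.
by case: nex; exists t.
Qed.

Lemma phi_feasible_of_phi (H : graph) a b m :
  phi H a b = Some m -> phi_feasible H a b m.
Proof.
by rewrite /phi; case: excluded_middle_informative => //= ex [<-]; case: ex_minnP.
Qed.

Lemma le_ext_phi (H K : graph) a b c d :
  (forall t, phi_feasible K c d t -> exists2 s, s <= t & phi_feasible H a b s) ->
  le_ext (phi H a b) (phi K c d).
Proof.
move=> HK; case E: (phi K c d) => [t|]; last by case: (phi H a b).
have [s le_st Hs] := HK t (phi_feasible_of_phi E).
exact: (le_ext_trans (phi_le_feasible Hs) (le_st : le_ext (Some s) (Some t))).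
Qed.

Lemma phi_feasible_void (H : graph) a b :
  (forall x : H, False) -> phi_feasible H a b 0.
Proof.
move=> void; have no_ord0 : 'I_0 -> False by case.
apply/existsP; exists [ffun x => match void x with end].
apply/existsP; exists [ffun i => match no_ord0 i with end].
by apply/and3P; split; apply/forallP => i;
  [case: (no_ord0 i) | case: (no_ord0 i) | case: (void i)].
Qed.

Lemma card_ord_ltn t n : n <= t -> #|[set i : 'I_t | i < n]| = n.
Proof.
by move=> le_nt; rewrite -sum1dep_card (big_ord_narrow le_nt) sum1_card card_ord.
Qed.

Lemma ord_enum_front t (P : {set 'I_t}) :
  {sigma : 'I_t -> 'I_t | injective sigma & forall j : 'I_t, j < #|P| -> sigma j \in P}.
Proof.
pose s := enum P ++ enum (~: P).
have size_s : size s = t by rewrite size_cat -!cardE cardsC card_ord.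
have uniq_s : uniq s.
  rewrite cat_uniq !enum_uniq /= andbT; apply/hasPn => x.
  by rewrite !mem_enum inE.
exists (fun j => nth j s j) => [i j|j lt_jP].
  rewrite (set_nth_default i j) ?size_s ?ltn_ord // => /eqP.
  by rewrite nth_uniq ?size_s ?ltn_ord // => /eqP /val_inj.
by rewrite nth_cat -cardE lt_jP -mem_enum mem_nth // -cardE.
Qed.

(* Only the classes in P need to be supported: relabelling the colours puts P in
   front, and the classes beyond #|P| are then exempt. *)
Lemma phi_feasible_relabel (H : graph) a b t (f : {ffun H -> 'I_t})
    (g : 'I_t -> (H * H)%type) (P : {set 'I_t}) :
  t - a <= #|P| ->
  (forall i, indep [set x | f x == i]) ->
  (forall i, i \in P ->
     free [set x | f x == i] && supports (g i).1 (g i).2 [set x | f x == i]) ->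
  (forall v, #|[set i in P | ((g i).1 == v) || ((g i).2 == v)]| <= b) ->
  phi_feasible H a b t.
Proof.
move=> le_P indep_f free_f load_g.
have [sigma sigma_inj sigmaP] := ord_enum_front P.
have sigma_front (j : 'I_t) : j < t - a -> sigma j \in P.
  by move=> lt_j; apply: sigmaP; apply: leq_trans lt_j le_P.
pose f' := [ffun x => invF sigma_inj (f x)].
have class_f' j : [set x | f' x == j] = [set x | f x == sigma j].
  apply/setP => x; rewrite !inE ffunE; apply/eqP/eqP => [<-|->].
    by rewrite f_invF.
  by rewrite invF_f.
apply/existsP; exists f'; apply/existsP; exists [ffun j => g (sigma j)].
apply/and3P; split.
- by apply/forallP => j; rewrite class_f'.
- apply/forallP => j; apply/implyP => lt_j; rewrite class_f' ffunE.
  exact/free_f/sigma_front.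
- apply/forallP => v; apply: leq_trans (load_g v).
  rewrite -(card_imset _ sigma_inj); apply/subset_leq_card/subsetP => i /imsetP [j].
  by rewrite inE ffunE => /andP [lt_j touch] ->; rewrite inE touch sigma_front.
Qed.

Lemma indep_setU1 (H : graph) (F : {set H}) w :
  indep F -> [disjoint F & nbhd w] -> indep (w |: F).
Proof.
move=> indepF disj; apply/forallP => x; apply/implyP; rewrite !inE => Fx.
apply/forallP => y; apply/implyP; rewrite !inE => Fy.
case/orP: Fx => [/eqP->|Fx]; case/orP: Fy => [/eqP->|Fy].
- by rewrite adj_irr.
- by apply/negP => wy; move: (disjointFr disj Fy); rewrite inE wy.
- by apply/negP => xw; move: (disjointFr disj Fx); rewrite inE adj_sym xw.
- by move/forallP/(_ x): indepF => /implyP/(_ Fx)/forallP/(_ y)/implyP/(_ Fy).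
Qed.

(* Maximal extensions of F + u and of F + v are distinct, as uv is an edge. *)
Lemma supports_free (H : graph) (F : {set H}) u v :
  indep F -> supports u v F -> free F.
Proof.
move=> indepF /andP [uv disj]; rewrite /free indepF /=.
have [S1 max1 sub1] := maxset_exists (indep_setU1 indepF (disjointWr (subsetUl _ _) disj)).
have [S2 max2 sub2] := maxset_exists (indep_setU1 indepF (disjointWr (subsetUr _ _) disj)).
apply/existsP; exists S1; apply/existsP; exists S2; apply/and5P; split => //.
- apply/eqP => eqS; subst S2.
  have S1u : u \in S1 by apply: (subsetP sub1); rewrite setU11.
  have S1v : v \in S1 by apply: (subsetP sub2); rewrite setU11.
  move/maxsetp/forallP/(_ u)/implyP/(_ S1u)/forallP/(_ v)/implyP/(_ S1v): max1.
  by rewrite uv.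
- exact: subset_trans (subsetUr _ _) sub1.
- exact: subset_trans (subsetUr _ _) sub2.
Qed.

Section Mycielskian.

Variables (G : graph) (x0 : G).

Definition myc_proj (x : Myc G) : G :=
  if x is Some (inl u | inr u) then u else x0.

Definition myc_base (F : {set Myc G}) : {set G} := [set x | Some (inl x) \in F].

Lemma indep_myc_base (F : {set Myc G}) : indep F -> indep (myc_base F).
Proof.
move=> /forallP indepF; apply/forallP => u; apply/implyP; rewrite inE => Fu.
apply/forallP => v; apply/implyP; rewrite inE => Fv.
by move/implyP/(_ Fu)/forallP/(_ (Some (inl v)))/implyP/(_ Fv): (indepF (Some (inl u))).
Qed.

(* Forgetting primes maps neighbours of u or u' in G to neighbours of inl u. *)
Lemma supports_myc_base (x y : Myc G) (F : {set Myc G}) : x != None -> y != None ->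
  supports x y F -> supports (myc_proj x) (myc_proj y) (myc_base F).
Proof.
case: x => [[u1|u1]|] // _; case: y => [[u2|u2]|] // _ /andP [/= adj12 disj];
  rewrite /supports adj12 disjoints_subset; apply/subsetP => v;
  rewrite !inE => Fv; have := disjointFr disj Fv; rewrite !inE /=;
  by case: (adj u1 v); case: (adj u2 v).
Qed.

Lemma phi_feasible_myc a b t :
  phi_feasible (Myc G) a b t -> phi_feasible G (a + b) (2 * b) t.
Proof.
move/existsP => [f /existsP [g /and3P [/forallP indep_f /forallP free_f /forallP load_g]]].
pose P := [set i : 'I_t | [&& i < t - a, (g i).1 != None & (g i).2 != None]].
pose f' := [ffun x : G => f (Some (inl x))].
have class_f' i : [set x | f' x == i] = myc_base [set x | f x == i].
  by apply/setP => x; rewrite !inE ffunE.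
apply: (@phi_feasible_relabel _ _ _ _ f' (fun i => (myc_proj (g i).1, myc_proj (g i).2)) P).
- pose Q := [set i : 'I_t | i < t - a].
  pose Z := [set i : 'I_t | (i < t - a) && (((g i).1 == None) || ((g i).2 == None))].
  have -> : P = Q :\: Z.
    by apply/setP => i; rewrite !inE; case: (i < t - a); rewrite //= andbT negb_or.
  rewrite cardsD subnDA card_ord_ltn ?leq_subr // leq_sub // (leq_trans _ (load_g None)) //.
  exact/subset_leq_card/subsetIr.
- by move=> i; rewrite class_f'; apply/indep_myc_base/indep_f.
- move=> i; rewrite inE => /and3P [lt_i nz1 nz2].
  have /andP [_ supp] := implyP (free_f i) lt_i.
  have supp' := supports_myc_base nz1 nz2 supp.
  by rewrite class_f' supp' (supports_free (indep_myc_base (indep_f i)) supp').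
- move=> v.
  pose touch w := [set i : 'I_t | (i < t - a) && (((g i).1 == w) || ((g i).2 == w))].
  apply: (@leq_trans #|touch (Some (inl v)) :|: touch (Some (inr v))|).
    apply/subset_leq_card/subsetP => i; rewrite !inE => /andP [/and3P [-> nz1 nz2]].
    by move: nz1 nz2; case: (g i).1 => [[u|u]|] //; case: (g i).2 => [[w|w]|] // _ _;
      rewrite /= => /orP [] /eqP ->; rewrite !eqxx ?orbT.
  by rewrite mul2n -addnn (leq_trans (leq_card_setU _ _)) ?leq_add ?load_g.
Qed.

End Mycielskian.

Lemma phi_Myc_ge (G : graph) a b : le_ext (phi G (a + b) (2 * b)) (phi (Myc G) a b).
Proof.
apply: le_ext_phi => t feas; case: (pickP (predT : pred G)) => [x0 _|void].
  by exists t => //; apply: phi_feasible_myc x0 _ _ _ feas.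
by exists 0 => //; apply: phi_feasible_void => x; move: (void x).
Qed.

Lemma phi_Myc_iter_ge k (G : graph) :
  le_ext (phi G (2 ^ k.+1 - 2) (2 ^ k.+1)) (phi (Myc_iter k G) 0 2).
Proof.
elim: k G => [|k IHk] G; first exact: le_ext_refl.
rewrite /Myc_iter iterSr; apply: le_ext_trans (IHk (Myc G)).
have le2 : 2 <= 2 ^ k.+1 by rewrite expnS leq_pmulr ?expn_gt0.
have -> : 2 ^ k.+2 - 2 = 2 ^ k.+1 - 2 + 2 ^ k.+1.
  by rewrite addnC addnBA // [2 ^ k.+2]expnS mul2n -addnn.
by rewrite [2 ^ k.+2]expnS; apply: phi_Myc_ge.
Qed.

Theorem mainTheorem8 (G : graph) (a b : nat) :
  1 <= b ->
  le_ext (phi G (a + b) (2 * b)) (phi (Myc G) a b) /\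
  (forall t : nat, 1 <= t ->
     le_ext (phi G (2 ^ t.+1 - 2) (2 ^ t.+1)) (phi (Myc_iter t G) 0 2)).
Proof.
by move=> _; split=> [|t _]; [apply: phi_Myc_ge | apply: phi_Myc_iter_ge].
Qed.
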